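(* For all $n\ge3$, $f_\infty(W_n)\le4$, where $W_n$ is the wheel obtained from a cycle of length $n$ by adding a vertex adjacent to all vertices of the cycle.
   Context: A distance function on a graph $G$ is $d:E(G)\to\mathbb{R}_{\ge0}$ with $d(vw)\le\sum_i d(v_{i-1}v_i)$ for every edge $vw$ and every $v$–$w$ path. $f_\infty(G)$ is the least $k$ such that for every distance function $d$ on $G$ there is $\phi:V(G)\to\mathbb{R}^k$ with $\|\phi(v)-\phi(w)\|_\infty=d(vw)$ for all edges $vw$. *)

From Stdlib Require Import Reals List Arith.
Import ListNotations.
Open Scope R_scope.

(* A graph on vertex set a subset of nat, given by a symmetric irreflexive
   adjacency relation [adj] (which also encodes the vertex set). *)

(* Wheel W_n: cycle vertices 0..n-1 (i adjacent to i+1 mod n), hub n. *)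
Definition wheel_adj (n : nat) (u v : nat) : Prop :=
  (u <= n)%nat /\ (v <= n)%nat /\ u <> v /\
  (u = n \/ v = n \/ ((u < n)%nat /\ (v < n)%nat /\
       (Nat.modulo (S u) n = v \/ Nat.modulo (S v) n = u))).

Fixpoint chain (adj : nat -> nat -> Prop) (v : nat) (l : list nat) : Prop :=
  match l with
  | [] => True
  | x :: l' => adj v x /\ chain adj x l'
  end.

Definition is_path (adj : nat -> nat -> Prop) (v w : nat) (l : list nat) : Prop :=
  chain adj v l /\ NoDup (v :: l) /\ last l v = w.

Fixpoint path_weight (d : nat -> nat -> R) (v : nat) (l : list nat) : R :=
  match l with
  | [] => 0
  | x :: l' => d v x + path_weight d x l'
  end.

(* Values of d on
   non-edges are irrelevant. *)
Definition distance_fn (adj : nat -> nat -> Prop) (d : nat -> nat -> R) : Prop :=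
  (forall u v, adj u v -> 0 <= d u v /\ d u v = d v u) /\
  (forall v w l, adj v w -> is_path adj v w l -> d v w <= path_weight d v l).

(* sup norm on R^k, vectors represented as functions nat -> R
   (coordinates 0..k-1); the sup norm of R^0 is 0. *)
Definition linf (k : nat) (x : nat -> R) : R :=
  fold_right Rmax 0 (map (fun i => Rabs (x i)) (seq 0 k)).

Definition realizable_linf (adj : nat -> nat -> Prop) (k : nat) : Prop :=
  forall d, distance_fn adj d ->
    exists phi : nat -> nat -> R,
      forall u v, adj u v -> linf k (fun i => phi u i - phi v i) = d u v.

From Stdlib Require Import Reals List Arith Lra Lia Classical Permutation.
Import ListNotations.
Open Scope R_scope.

(* Proof of f_infty(W_n) <= 4.  Let n be the hub of W_n and 0, ..., n-1 its rim,
   let r i = d(n, i) be the spokes and e i = d(i, i+1 mod n) the rim edges.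
   The distance-function axioms give the triangle inequalities
   |r i - r (i+1)| <= e i <= r i + r (i+1) and the cycle inequality
   2 e p <= e 0 + ... + e (n-1).  Put the hub at the origin of R^4; rim vertex
   i gets (f_0 i, ..., f_3 i), where each "coordinate" f_k satisfies
   |f_k i| <= r i and |f_k i - f_k (i+1)| <= e i, f_0 = r realizes the spokes,
   and each rim edge must be attained by some f_k:
   - f_1, f_2 come from a greedy walk along the path 0, ..., n-1 keeping one of
     the two values on the boundary [-r i, r i] and attaining every path edge;
     they are then clamped into the band around their value at 0 whose
     half-width is the remaining rim length, which controls the closing edge;
   - up to the first index m where a walk leaves its band nothing changes, and
     from m on the clamped walk runs along the band, attaining all later edges;
   - the edge (m-1, m) (or the closing edge) is attained by f_3, a truncated
     cone max(-r, r p - rim distance to p) with apex p = m-1.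
   The file proves the one-dimensional facts (greedy step and walk, prefix
   sums), then the four coordinates for abstract rim data (section
   RimCoordinates), then extracts the rim data from a distance function on the
   wheel and assembles the l_infty realization. *)

Lemma Rmax_lipschitz a a' b b' k :
  Rabs (a - a') <= k -> Rabs (b - b') <= k -> Rabs (Rmax a b - Rmax a' b') <= k.
Proof.
  unfold Rmax; repeat destruct (Rle_dec _ _); unfold Rabs;
  repeat destruct (Rcase_abs _); lra.
Qed.

Lemma Rmin_lipschitz a a' b b' k :
  Rabs (a - a') <= k -> Rabs (b - b') <= k -> Rabs (Rmin a b - Rmin a' b') <= k.
Proof.
  unfold Rmin; repeat destruct (Rle_dec _ _); unfold Rabs;
  repeat destruct (Rcase_abs _); lra.
Qed.

Definition greedy_move (r' e E F E' F' : R) : Prop :=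
  Rabs E' <= r' /\ Rabs F' <= r' /\ Rabs (E - E') <= e /\ Rabs (F - F') <= e /\
  (Rabs (E - E') = e \/ Rabs (F - F') = e) /\ (Rabs E' = r' \/ Rabs F' = r').

Lemma greedy_move_swap r' e E F E' F' :
  greedy_move r' e E F E' F' -> greedy_move r' e F E F' E'.
Proof. unfold greedy_move; tauto. Qed.

Lemma greedy_move_opp r' e E F E' F' :
  greedy_move r' e E F E' F' -> greedy_move r' e (- E) (- F) (- E') (- F').
Proof.
  unfold greedy_move.
  replace (- E - - E') with (- (E - E')) by ring.
  replace (- F - - F') with (- (F - F')) by ring.
  rewrite !Rabs_Ropp; tauto.
Qed.

(* The case E = r: either F can reach the boundary of [-r', r'] (and E moves
   by exactly e towards 0), or F is deep inside and moves by exactly e while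
   E steps onto r'. *)
Lemma greedy_move_top r r' e F :
  0 <= r' -> Rabs (r - r') <= e -> e <= r + r' -> Rabs F <= r ->
  exists E' F', greedy_move r' e r F E' F'.
Proof.
  intros Hr' Hd Hs HF; unfold greedy_move.
  destruct (Rle_dec (r' - e) (Rabs F)) as [Hreach | Hdeep].
  - exists (r - e), (if Rle_dec 0 F then r' else - r').
    destruct (Rle_dec 0 F); revert Hd HF Hreach; unfold Rabs;
      repeat destruct (Rcase_abs _); intros; lra.
  - exists r', (F + e).
    revert Hd HF Hdeep; unfold Rabs; repeat destruct (Rcase_abs _); intros; lra.
Qed.

Lemma greedy_step r r' e E F :
  0 <= r' -> Rabs (r - r') <= e -> e <= r + r' ->
  Rabs E <= r -> Rabs F <= r -> (Rabs E = r \/ Rabs F = r) ->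
  exists E' F', greedy_move r' e E F E' F'.
Proof.
  intros Hr' Hd Hs HE HF Hb.
  assert (Htop : forall G H, Rabs G = r -> Rabs H <= r ->
            exists G' H', greedy_move r' e G H G' H').
  { intros G H HG HH.
    destruct (Rle_dec 0 G) as [Gpos | Gneg].
    - rewrite Rabs_right in HG by lra; subst G.
      now apply greedy_move_top.
    - rewrite Rabs_left in HG by lra.
      destruct (greedy_move_top r r' e (- H)) as [G' [H' Hm]];
        [ assumption .. | now rewrite Rabs_Ropp | ].
      exists (- G'), (- H').
      apply greedy_move_opp in Hm.
      now replace G with (- r) by lra; rewrite Ropp_involutive in Hm. }
  destruct Hb as [Hb | Hb].
  - now apply Htop.
  - destruct (Htop F E Hb HE) as [F' [E' Hm]].
    exists E', F'; now apply greedy_move_swap.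
Qed.

Definition upd (f : nat -> R) (m : nat) (v : R) : nat -> R :=
  fun j => if Nat.eqb j m then v else f j.

Lemma upd_eq f m v : upd f m v m = v.
Proof. unfold upd; now rewrite Nat.eqb_refl. Qed.

Lemma upd_neq f m v j : j <> m -> upd f m v j = f j.
Proof. intro H; unfold upd; apply Nat.eqb_neq in H; now rewrite H. Qed.

Lemma greedy_walk (n : nat) (r e : nat -> R) :
  (forall i, (i < n)%nat -> 0 <= r i) ->
  (forall i, (S i < n)%nat -> Rabs (r i - r (S i)) <= e i /\ e i <= r i + r (S i)) ->
  exists B C : nat -> R,
    (forall i, (i < n)%nat -> Rabs (B i) <= r i /\ Rabs (C i) <= r i) /\
    (forall i, (S i < n)%nat ->
       Rabs (B i - B (S i)) <= e i /\ Rabs (C i - C (S i)) <= e i /\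
       (Rabs (B i - B (S i)) = e i \/ Rabs (C i - C (S i)) = e i)).
Proof.
  intros Hr Hs.
  assert (Hwalk : forall m, (m < n)%nat -> exists B C : nat -> R,
    (forall i, (i <= m)%nat -> Rabs (B i) <= r i /\ Rabs (C i) <= r i) /\
    (forall i, (S i <= m)%nat ->
       Rabs (B i - B (S i)) <= e i /\ Rabs (C i - C (S i)) <= e i /\
       (Rabs (B i - B (S i)) = e i \/ Rabs (C i - C (S i)) = e i)) /\
    (Rabs (B m) = r m \/ Rabs (C m) = r m)).
  { induction m as [|m IH]; intro Hm.
    - exists (fun _ => r O), (fun _ => r O).
      assert (H0 : 0 <= r O) by (apply Hr; lia).
      split; [|split]; [intros i Hi | intros i Hi; lia | left].
      + replace i with O by lia; rewrite Rabs_right; lra.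
      + apply Rabs_right; lra.
    - destruct (IH ltac:(lia)) as [B [C [Hb [Hl Hx]]]].
      destruct (Hs m ltac:(lia)) as [Hd Hsum].
      destruct (Hb m ltac:(lia)) as [HB HC].
      destruct (greedy_step (r m) (r (S m)) (e m) (B m) (C m))
        as [E' [F' [HE' [HF' [HmE [HmF [Htight Hbd]]]]]]];
        try apply Hr; try lia; try assumption.
      exists (upd B (S m) E'), (upd C (S m) F').
      rewrite !upd_eq; split; [|split]; [intros i Hi | intros i Hi | assumption].
      + destruct (Nat.eq_dec i (S m)) as [->|Hne].
        * now rewrite !upd_eq.
        * rewrite !upd_neq by assumption; apply Hb; lia.
      + destruct (Nat.eq_dec i m) as [->|Hne].
        * rewrite !upd_eq, !upd_neq by lia; tauto.
        * rewrite !upd_neq by lia; apply Hl; lia. }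
  destruct n as [|n].
  - exists (fun _ => 0), (fun _ => 0); split; intros; lia.
  - destruct (Hwalk n ltac:(lia)) as [B [C [Hb [Hl _]]]].
    exists B, C; split; intros; [apply Hb | apply Hl]; lia.
Qed.

Fixpoint prefix_sum (e : nat -> R) (i : nat) : R :=
  match i with O => 0 | S k => prefix_sum e k + e k end.

Lemma prefix_sum_mono (n : nat) (e : nat -> R) :
  (forall i, (i < n)%nat -> 0 <= e i) ->
  forall i j, (i <= j <= n)%nat -> prefix_sum e i <= prefix_sum e j.
Proof.
  intros He i j [Hij Hjn]; induction Hij as [|j Hij IH]; [lra|].
  simpl; specialize (IH ltac:(lia)); specialize (He j ltac:(lia)); lra.
Qed.

Lemma prefix_sum_last (e : nat -> R) (n : nat) :
  (0 < n)%nat -> prefix_sum e n = prefix_sum e (pred n) + e (pred n).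
Proof. intro; now destruct n; [lia|]. Qed.

Lemma path_lipschitz (n : nat) (e f : nat -> R) :
  (forall j, (S j < n)%nat -> Rabs (f j - f (S j)) <= e j) ->
  forall i j, (i <= j < n)%nat ->
  Rabs (f i - f j) <= prefix_sum e j - prefix_sum e i.
Proof.
  intros Hf i j [Hij Hjn]; induction Hij as [|j Hij IH].
  - unfold Rminus; rewrite !Rplus_opp_r, Rabs_R0; lra.
  - specialize (IH ltac:(lia)); specialize (Hf j ltac:(lia)); simpl.
    pose proof (Rabs_triang (f i - f j) (f j - f (S j))) as Htri.
    replace (f i - f j + (f j - f (S j))) with (f i - f (S j)) in Htri by ring.
    lra.
Qed.

Lemma first_occurrence (P : nat -> Prop) (n : nat) :
  exists m, (m <= n)%nat /\ (forall j, (j < m)%nat -> ~ P j) /\ ((m < n)%nat -> P m).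
Proof.
  induction n as [|n [m [Hmn [Hbefore Hat]]]].
  - exists O; split; [lia | split; intros; lia].
  - destruct (Nat.eq_dec m n) as [-> | Hne].
    + destruct (classic (P n)) as [Hn | Hn].
      * exists n; split; [lia | split; auto].
      * exists (S n); split; [lia | split; [|intro; lia]].
        intros j Hj; destruct (Nat.eq_dec j n) as [-> | Hjn]; auto.
        apply Hbefore; lia.
    + exists m; split; [lia | split; auto].
      intro; apply Hat; lia.
Qed.

Definition rim_next (n i : nat) : nat := Nat.modulo (S i) n.

Lemma rim_next_inner n i : (S i < n)%nat -> rim_next n i = S i.
Proof. intro; now apply Nat.mod_small. Qed.

Lemma rim_next_last n : (0 < n)%nat -> rim_next n (pred n) = O.
Proof.
  intro; unfold rim_next; replace (S (pred n)) with n by lia.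
  apply Nat.Div0.mod_same.
Qed.

Lemma rim_next_lt n i : (0 < n)%nat -> (rim_next n i < n)%nat.
Proof. intro; apply Nat.mod_upper_bound; lia. Qed.

Lemma on_rim_edges (n : nat) (P : nat -> nat -> Prop) :
  (forall i, (S i < n)%nat -> P i (S i)) -> P (pred n) O ->
  forall i, (i < n)%nat -> P i (rim_next n i).
Proof.
  intros Hin Hlast i Hi.
  destruct (lt_dec (S i) n) as [Hs | Hs].
  - rewrite rim_next_inner by assumption; auto.
  - replace i with (pred n) by lia; rewrite rim_next_last by lia; auto.
Qed.

Section RimCoordinates.

Variables (n : nat) (r e : nat -> R).

Hypothesis n_pos : (0 < n)%nat.
Hypothesis r_nonneg : forall i, (i < n)%nat -> 0 <= r i.
Hypothesis e_nonneg : forall i, (i < n)%nat -> 0 <= e i.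
Hypothesis spoke_diff : forall i, (i < n)%nat -> Rabs (r i - r (rim_next n i)) <= e i.
Hypothesis spoke_sum : forall i, (i < n)%nat -> e i <= r i + r (rim_next n i).
Hypothesis rim_cycle : forall p, (p < n)%nat -> 2 * e p <= prefix_sum e n.

Local Notation rim_pos := (prefix_sum e).
Local Notation rim_len := (prefix_sum e n).

(* A coordinate of an l_infty realization with the hub at the origin: it is
   dominated by the spokes and does not stretch any rim edge. *)
Definition coordinate (f : nat -> R) : Prop :=
  (forall i, (i < n)%nat -> Rabs (f i) <= r i) /\
  (forall i, (i < n)%nat -> Rabs (f i - f (rim_next n i)) <= e i).

Definition tight (f : nat -> R) (i : nat) : Prop :=
  Rabs (f i - f (rim_next n i)) = e i.

Lemma rim_pos_mono i j : (i <= j <= n)%nat -> rim_pos i <= rim_pos j.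
Proof. now apply prefix_sum_mono. Qed.

Lemma rim_len_split : rim_len = rim_pos (pred n) + e (pred n).
Proof. now apply prefix_sum_last. Qed.

Lemma rim_len_nonneg : 0 <= rim_len.
Proof. apply (rim_pos_mono O n); lia. Qed.

Definition rim_dist (i j : nat) : R :=
  Rmin (Rabs (rim_pos i - rim_pos j)) (rim_len - Rabs (rim_pos i - rim_pos j)).

Lemma rim_lipschitz (f : nat -> R) :
  (forall i, (i < n)%nat -> Rabs (f i - f (rim_next n i)) <= e i) ->
  forall i j, (i < n)%nat -> (j < n)%nat -> Rabs (f i - f j) <= rim_dist i j.
Proof.
  intros Hf.
  assert (Hinner : forall j, (S j < n)%nat -> Rabs (f j - f (S j)) <= e j).
  { intros j Hj; rewrite <- (rim_next_inner n j Hj); apply Hf; lia. }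
  assert (Hclose : Rabs (f (pred n) - f O) <= e (pred n)).
  { rewrite <- (rim_next_last n n_pos); apply Hf; lia. }
  assert (Hle : forall i j, (i <= j < n)%nat -> Rabs (f i - f j) <= rim_dist i j).
  { intros i j Hij; unfold rim_dist.
    rewrite (Rabs_left1 (rim_pos i - rim_pos j))
      by (pose proof (rim_pos_mono i j ltac:(lia)); lra).
    apply Rmin_glb.
    - pose proof (path_lipschitz n e f Hinner i j Hij); lra.
    - pose proof (path_lipschitz n e f Hinner O i ltac:(lia)) as Hstart.
      pose proof (path_lipschitz n e f Hinner j (pred n) ltac:(lia)) as Hend.
      pose proof rim_len_split; simpl prefix_sum in Hstart.
      pose proof (Rabs_triang (f i - f O) (f O - f j)) as T1.
      pose proof (Rabs_triang (f O - f (pred n)) (f (pred n) - f j)) as T2.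
      replace (f i - f O + (f O - f j)) with (f i - f j) in T1 by ring.
      replace (f O - f (pred n) + (f (pred n) - f j)) with (f O - f j) in T2 by ring.
      rewrite Rabs_minus_sym in Hstart, Hend, Hclose; lra. }
  intros i j Hi Hj; destruct (Nat.le_ge_cases i j).
  - apply Hle; lia.
  - rewrite Rabs_minus_sym; unfold rim_dist; rewrite (Rabs_minus_sym (rim_pos i)).
    apply Hle; lia.
Qed.

Lemma r_coordinate : coordinate r.
Proof.
  split; [|assumption].
  intros i Hi; rewrite Rabs_right; [lra | apply Rle_ge; auto].
Qed.

Lemma rim_dist_lipschitz p : (p < n)%nat ->
  forall i, (i < n)%nat -> Rabs (rim_dist p i - rim_dist p (rim_next n i)) <= e i.
Proof.
  intros Hp; apply (on_rim_edges n (fun i j => Rabs (rim_dist p i - rim_dist p j) <= e i));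
    unfold rim_dist.
  - intros i Hi.
    assert (Hgap : Rabs (Rabs (rim_pos p - rim_pos i) - Rabs (rim_pos p - rim_pos (S i)))
                   <= e i).
    { eapply Rle_trans; [apply Rabs_triang_inv2|].
      replace (rim_pos p - rim_pos i - (rim_pos p - rim_pos (S i))) with (e i)
        by (simpl; ring).
      rewrite Rabs_right; [lra | apply Rle_ge, e_nonneg; lia]. }
    apply Rmin_lipschitz; [assumption|].
    replace (rim_len - Rabs (rim_pos p - rim_pos i) -
             (rim_len - Rabs (rim_pos p - rim_pos (S i))))
      with (- (Rabs (rim_pos p - rim_pos i) - Rabs (rim_pos p - rim_pos (S i)))) by ring.
    now rewrite Rabs_Ropp.
  - pose proof (rim_pos_mono p (pred n) ltac:(lia)).
    pose proof (rim_pos_mono O p ltac:(lia)).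
    pose proof rim_len_split; pose proof (e_nonneg (pred n) ltac:(lia)).
    simpl prefix_sum in *.
    rewrite (Rabs_left1 (rim_pos p - rim_pos (pred n))) by lra.
    rewrite (Rabs_right (rim_pos p - 0)) by lra.
    rewrite (Rmin_comm (rim_pos p - 0)).
    apply Rmin_lipschitz; unfold Rabs; destruct (Rcase_abs _); lra.
Qed.

Lemma rim_dist_next p : (p < n)%nat -> rim_dist p (rim_next n p) = e p.
Proof.
  intros Hp; pose proof (rim_cycle p Hp); pose proof (e_nonneg p Hp).
  unfold rim_dist; destruct (lt_dec (S p) n) as [Hs | Hs].
  - rewrite rim_next_inner by assumption; simpl prefix_sum.
    replace (rim_pos p - (rim_pos p + e p)) with (- e p) by ring.
    rewrite Rabs_Ropp, Rabs_right by lra; apply Rmin_left; lra.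
  - replace p with (pred n) in * by lia; rewrite rim_next_last by lia.
    pose proof rim_len_split; simpl prefix_sum.
    rewrite Rabs_right by lra; rewrite Rmin_right; lra.
Qed.

Definition cone (p i : nat) : R := Rmax (- r i) (r p - rim_dist p i).

Lemma cone_coordinate p : (p < n)%nat -> coordinate (cone p).
Proof.
  intros Hp; split; intros i Hi; unfold cone.
  - pose proof (rim_lipschitz r spoke_diff p i Hp Hi) as Hdist.
    pose proof (r_nonneg i Hi).
    apply Rabs_le; split; [apply Rmax_l|].
    apply Rmax_lub; [lra|]; revert Hdist; unfold Rabs; destruct (Rcase_abs _); lra.
  - apply Rmax_lipschitz.
    + replace (- r i - - r (rim_next n i)) with (- (r i - r (rim_next n i))) by ring.
      rewrite Rabs_Ropp; auto.
    + replace (r p - rim_dist p i - (r p - rim_dist p (rim_next n i)))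
        with (- (rim_dist p i - rim_dist p (rim_next n i))) by ring.
      rewrite Rabs_Ropp; now apply rim_dist_lipschitz.
Qed.

Lemma cone_tight p : (p < n)%nat -> tight (cone p) p.
Proof.
  intros Hp; unfold tight, cone.
  rewrite rim_dist_next by assumption.
  assert (Hself : rim_dist p p = 0).
  { unfold rim_dist; rewrite Rminus_diag, Rabs_R0.
    pose proof rim_len_nonneg; apply Rmin_left; lra. }
  pose proof (r_nonneg p Hp); pose proof (e_nonneg p Hp); pose proof (spoke_sum p Hp).
  rewrite Hself, Rmax_right, Rmax_right by lra.
  replace (r p - 0 - (r p - e p)) with (e p) by ring.
  apply Rabs_right; lra.
Qed.

Definition path_coordinate (X : nat -> R) : Prop :=
  (forall i, (i < n)%nat -> Rabs (X i) <= r i) /\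
  (forall i, (S i < n)%nat -> Rabs (X i - X (S i)) <= e i).

Local Notation remaining i := (rim_len - rim_pos i).

(* Clamping X into the band of half-width [remaining i] around X 0: a value
   outside the band could not be joined back to X 0 along the closing part
   of the rim. *)
Definition clamp (X : nat -> R) (i : nat) : R :=
  Rmax (X O - remaining i) (Rmin (X O + remaining i) (X i)).

Definition escapes (X : nat -> R) (i : nat) : Prop := remaining i < Rabs (X i - X O).

Lemma clamp_id X i : ~ escapes X i -> clamp X i = X i.
Proof.
  unfold escapes, clamp; intro Hin; apply Rnot_lt_le in Hin.
  revert Hin; unfold Rmax, Rmin, Rabs;
    repeat destruct (Rle_dec _ _); repeat destruct (Rcase_abs _); lra.
Qed.

Lemma no_escape_start X : ~ escapes X O.
Proof.
  unfold escapes; rewrite Rminus_diag, Rabs_R0; simpl prefix_sum.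
  pose proof rim_len_nonneg; lra.
Qed.

Lemma clamp_in_band X i : (i <= n)%nat -> Rabs (clamp X i - X O) <= remaining i.
Proof.
  intro Hi; pose proof (rim_pos_mono i n ltac:(lia)).
  unfold clamp, Rmax, Rmin, Rabs;
    repeat destruct (Rle_dec _ _); repeat destruct (Rcase_abs _); lra.
Qed.

Lemma clamp_coordinate X : path_coordinate X -> coordinate (clamp X).
Proof.
  intros [Hbound Hstep]; split.
  - intros i Hi.
    assert (Hband : Rabs (r O - r i) <= remaining i).
    { eapply Rle_trans; [apply (rim_lipschitz r spoke_diff); lia|].
      unfold rim_dist; simpl prefix_sum; rewrite Rminus_0_l, Rabs_Ropp.
      rewrite (Rabs_right (rim_pos i)) by (apply Rle_ge, (rim_pos_mono O i); lia).
      apply Rmin_r. }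
    pose proof (Hbound O ltac:(lia)); pose proof (Hbound i Hi); pose proof (r_nonneg i Hi).
    revert Hband; unfold clamp, Rmax, Rmin; repeat destruct (Rle_dec _ _);
      unfold Rabs in *; repeat destruct (Rcase_abs _); lra.
  - apply (on_rim_edges n (fun i j => Rabs (clamp X i - clamp X j) <= e i)).
    + intros i Hi; unfold clamp.
      pose proof (e_nonneg i ltac:(lia)).
      assert (Hedge : Rabs (remaining i - remaining (S i)) <= e i).
      { simpl prefix_sum; replace (rim_len - rim_pos i - (rim_len - (rim_pos i + e i)))
          with (e i) by ring; rewrite Rabs_right; lra. }
      apply Rmax_lipschitz; [|apply Rmin_lipschitz; [|now apply Hstep]];
        revert Hedge; unfold Rabs; repeat destruct (Rcase_abs _); lra.
    + rewrite (clamp_id X O (no_escape_start X)).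
      pose proof (clamp_in_band X (pred n) ltac:(lia)); pose proof rim_len_split; lra.
Qed.

(* Once X has escaped the band at m, it stays outside on the same side, so
   from m on the clamped function runs along one edge of the band. *)
Lemma clamp_follows_band X m : path_coordinate X -> escapes X m -> (m < n)%nat ->
  exists s, (s = 1 \/ s = -1) /\
    forall j, (m <= j < n)%nat -> clamp X j = X O + s * remaining j.
Proof.
  intros [_ Hstep] Hesc Hm.
  assert (Hdrift : forall j, (m <= j < n)%nat ->
            Rabs (X m - X j) <= rim_pos j - rim_pos m)
    by (intros; now apply (path_lipschitz n e X Hstep)).
  assert (Hwidth : forall j, (j < n)%nat -> 0 <= remaining j)
    by (intros j Hj; pose proof (rim_pos_mono j n ltac:(lia)); lra).
  unfold escapes, clamp in *.
  destruct (Rle_dec 0 (X m - X O)) as [Habove | Hbelow].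
  - exists 1; split; [now left|]; intros j Hj.
    specialize (Hdrift j Hj); specialize (Hwidth j ltac:(lia)).
    revert Hesc Hdrift; rewrite (Rabs_right (X m - X O)) by lra; intros.
    rewrite Rmin_left, Rmax_right;
      revert Hdrift; unfold Rabs; destruct (Rcase_abs _); intros; lra.
  - exists (-1); split; [now right|]; intros j Hj.
    specialize (Hdrift j Hj); specialize (Hwidth j ltac:(lia)).
    revert Hesc Hdrift; rewrite (Rabs_left (X m - X O)) by lra; intros.
    rewrite Rmin_right, Rmax_left;
      revert Hdrift; unfold Rabs; destruct (Rcase_abs _); intros; lra.
Qed.

Lemma clamp_tight_after X m : path_coordinate X -> escapes X m ->
  forall i, (m <= i < n)%nat -> tight (clamp X) i.
Proof.
  intros HX Hesc.
  enough (Hafter : forall i, (i < n)%nat -> (m <= i)%nat -> tight (clamp X) i)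
    by (intros i Hi; apply Hafter; lia).
  destruct (lt_dec m n) as [Hm | Hm]; [|intros; lia].
  destruct (clamp_follows_band X m HX Hesc Hm) as [s [Hs Hband]].
  assert (Hunit : forall x, Rabs (s * x) = Rabs x)
    by (intro x; destruct Hs as [-> | ->];
        [ now rewrite Rmult_1_l
        | now replace (-1 * x) with (- x) by ring; rewrite Rabs_Ropp ]).
  apply (on_rim_edges n (fun i j => (m <= i)%nat -> Rabs (clamp X i - clamp X j) = e i)).
  - intros i Hi Hmi; rewrite !Hband by lia; simpl prefix_sum.
    replace (X O + s * (rim_len - rim_pos i) - (X O + s * (rim_len - (rim_pos i + e i))))
      with (s * e i) by ring.
    rewrite Hunit; apply Rabs_right, Rle_ge, e_nonneg; lia.
  - intros Hmi; rewrite Hband, (clamp_id X O (no_escape_start X)) by lia.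
    rewrite rim_len_split.
    replace (X O + s * (rim_pos (pred n) + e (pred n) - rim_pos (pred n)) - X O)
      with (s * e (pred n)) by ring.
    rewrite Hunit; apply Rabs_right, Rle_ge, e_nonneg; lia.
Qed.

(* The four coordinates: the spokes themselves, the two greedy walks clamped
   into the band, and a cone whose apex is the edge just before the first
   escape from the band (the closing edge if there is no escape).  Edges
   before the apex are realized by a greedy walk, which clamping has not
   changed yet; edges after it by a walk running along the band. *)
Lemma rim_coordinates :
  exists X : nat -> nat -> R,
    (forall k, (k < 4)%nat -> coordinate (X k)) /\
    (forall i, (i < n)%nat -> X O i = r i) /\
    (forall i, (i < n)%nat -> exists k, (k < 4)%nat /\ tight (X k) i).
Proof.
  assert (Hinner : forall i, (S i < n)%nat ->
            Rabs (r i - r (S i)) <= e i /\ e i <= r i + r (S i)).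
  { intros i Hi; rewrite <- (rim_next_inner n i Hi).
    split; [apply spoke_diff | apply spoke_sum]; lia. }
  destruct (greedy_walk n r e r_nonneg Hinner) as [B [C [Hbound Hstep]]].
  assert (HB : path_coordinate B) by (split; intros; [apply Hbound | apply Hstep]; lia).
  assert (HC : path_coordinate C) by (split; intros; [apply Hbound | apply Hstep]; lia).
  destruct (first_occurrence (fun j => escapes B j \/ escapes C j) n)
    as [m [Hmn [Hbefore Hat]]].
  assert (Hm : m <> O)
    by (intros ->; destruct (Hat n_pos); eapply no_escape_start; eassumption).
  exists (fun k => match k with
                   | O => r | 1 => clamp B | 2 => clamp C | _ => cone (pred m) end).
  split; [|split; [reflexivity|]].
  - intros [|[|[|k]]] Hk.
    + apply r_coordinate.
    + now apply clamp_coordinate.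
    + now apply clamp_coordinate.
    + apply cone_coordinate; lia.
  - intros i Hi; destruct (lt_eq_lt_dec i (pred m)) as [[Hlt | ->] | Hgt].
    + assert (Hclean : forall j, (j <= S i)%nat -> clamp B j = B j /\ clamp C j = C j)
        by (intros j Hj; split; apply clamp_id; intro; apply (Hbefore j); auto; lia).
      destruct (Hclean i ltac:(lia)) as [HBi HCi].
      destruct (Hclean (S i) ltac:(lia)) as [HBs HCs].
      destruct (Hstep i ltac:(lia)) as [_ [_ [Htight | Htight]]];
        [exists 1%nat | exists 2%nat]; (split; [lia|]); unfold tight;
        rewrite rim_next_inner by lia; cbn; congruence.
    + exists 3%nat; split; [lia|]; apply cone_tight; lia.
    + destruct (Hat ltac:(lia)) as [Hesc | Hesc]; [exists 1%nat | exists 2%nat];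
        split; try lia; apply (clamp_tight_after _ m); auto; lia.
Qed.

End RimCoordinates.

Lemma last_cons (l : list nat) x v : last (x :: l) v = last l x.
Proof.
  revert x v; induction l as [|y l IH]; intros x v; [reflexivity|].
  change (last (x :: y :: l) v) with (last (y :: l) v); now rewrite !IH.
Qed.

Lemma last_app (l1 l2 : list nat) v : last (l1 ++ l2) v = last l2 (last l1 v).
Proof.
  revert v; induction l1 as [|x l1 IH]; intro v; [reflexivity|].
  rewrite <- app_comm_cons, !last_cons; apply IH.
Qed.

Lemma chain_app (adj : nat -> nat -> Prop) v l1 l2 :
  chain adj v (l1 ++ l2) <-> chain adj v l1 /\ chain adj (last l1 v) l2.
Proof.
  revert v; induction l1 as [|x l1 IH]; intro v; [simpl; tauto|].
  change (adj v x /\ chain adj x (l1 ++ l2) <->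
          (adj v x /\ chain adj x l1) /\ chain adj (last (x :: l1) v) l2).
  rewrite IH, last_cons; tauto.
Qed.

Lemma path_weight_app (d : nat -> nat -> R) v l1 l2 :
  path_weight d v (l1 ++ l2) = path_weight d v l1 + path_weight d (last l1 v) l2.
Proof.
  revert v; induction l1 as [|x l1 IH]; intro v; [simpl; ring|].
  change (d v x + path_weight d x (l1 ++ l2) =
          d v x + path_weight d x l1 + path_weight d (last (x :: l1) v) l2).
  rewrite IH, last_cons; ring.
Qed.

Lemma distance_triangle (adj : nat -> nat -> Prop) d a b c :
  distance_fn adj d -> adj a c -> adj c b -> adj a b ->
  a <> b -> a <> c -> c <> b -> d a b <= d a c + d c b.
Proof.
  intros [_ Hpath] Hac Hcb Hab Nab Nac Ncb.
  assert (Hp : is_path adj a b [c; b]).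
  { split; [simpl; tauto | split; [|reflexivity]].
    repeat constructor; simpl; intuition. }
  pose proof (Hpath a b [c; b] Hab Hp); simpl in *; lra.
Qed.

Lemma wheel_spoke n i : (i < n)%nat -> wheel_adj n n i /\ wheel_adj n i n.
Proof. intro; unfold wheel_adj; split; repeat split; try lia; tauto. Qed.

Lemma wheel_rim n i : (2 <= n)%nat -> (i < n)%nat ->
  wheel_adj n i (rim_next n i) /\ wheel_adj n (rim_next n i) i.
Proof.
  intros Hn Hi; pose proof (rim_next_lt n i ltac:(lia)).
  assert (i <> rim_next n i).
  { destruct (lt_dec (S i) n).
    - rewrite rim_next_inner; lia.
    - replace i with (pred n) by lia; rewrite rim_next_last; lia. }
  unfold wheel_adj; split; repeat split; try lia; right; right; tauto.
Qed.

Definition rim_length (d : nat -> nat -> R) (n i : nat) : R := d i (rim_next n i).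

Lemma rim_arc n a k : (2 <= n)%nat -> (a + k < n)%nat ->
  is_path (wheel_adj n) a (a + k) (seq (S a) k).
Proof.
  intros Hn Hak; split; [|split].
  - revert a Hak; induction k as [|k IH]; intros a Hak; simpl; [trivial|].
    split; [|apply IH; lia].
    rewrite <- (rim_next_inner n a) by lia; apply wheel_rim; lia.
  - rewrite cons_seq; apply seq_NoDup.
  - revert a Hak; induction k as [|k IH]; intros a Hak; cbn [seq]; [simpl; lia|].
    rewrite last_cons, IH; lia.
Qed.

Lemma rim_arc_weight n d a k : (a + k < n)%nat ->
  path_weight d a (seq (S a) k) =
  prefix_sum (rim_length d n) (a + k) - prefix_sum (rim_length d n) a.
Proof.
  revert a; induction k as [|k IH]; intros a Hak; simpl.
  - rewrite Nat.add_0_r; ring.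
  - rewrite IH by lia; replace (a + S k)%nat with (S a + k)%nat by lia.
    change (prefix_sum (rim_length d n) (S a))
      with (prefix_sum (rim_length d n) a + d a (rim_next n a)).
    rewrite rim_next_inner by lia; ring.
Qed.

Lemma rim_round_path n p : (2 <= n)%nat -> (S p < n)%nat ->
  is_path (wheel_adj n) (S p) p (seq (S (S p)) (pred n - S p) ++ seq O (S p)).
Proof.
  intros Hn Hs.
  destruct (rim_arc n (S p) (pred n - S p) Hn ltac:(lia)) as [Hchain1 [_ Hlast1]].
  destruct (rim_arc n O p Hn ltac:(lia)) as [Hchain2 [_ Hlast2]].
  replace (S p + (pred n - S p))%nat with (pred n) in Hlast1 by lia.
  split; [|split].
  - apply chain_app; rewrite Hlast1; split; [assumption|].
    split; [|assumption].
    rewrite <- (rim_next_last n) by lia; apply wheel_rim; lia.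
  - rewrite app_comm_cons, cons_seq.
    apply (Permutation_NoDup (Permutation_app_comm (seq O (S p)) _)).
    rewrite <- seq_app; apply seq_NoDup.
  - rewrite last_app, Hlast1; cbn [seq]; now rewrite last_cons, Hlast2.
Qed.

(* The cycle inequality: the rest of the rim is a path between the ends of
   any rim edge, so no rim edge is longer than half the rim. *)
Lemma wheel_rim_cycle n d : (2 <= n)%nat -> distance_fn (wheel_adj n) d ->
  forall p, (p < n)%nat -> 2 * rim_length d n p <= prefix_sum (rim_length d n) n.
Proof.
  intros Hn [Hsym Hpath] p Hp.
  assert (Hlen : prefix_sum (rim_length d n) n =
                 prefix_sum (rim_length d n) (pred n) + d (pred n) O).
  { rewrite prefix_sum_last by lia.
    unfold rim_length at 2; now rewrite rim_next_last by lia. }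
  unfold rim_length at 1.
  destruct (wheel_rim n p Hn Hp) as [Hfwd Hbwd].
  destruct (lt_dec (S p) n) as [Hs | Hs].
  - rewrite (rim_next_inner n p Hs) in *.
    pose proof (Hpath (S p) p _ Hbwd (rim_round_path n p Hn Hs)) as Hw.
    destruct (rim_arc n (S p) (pred n - S p) Hn ltac:(lia)) as [_ [_ Hlast]].
    replace (S p + (pred n - S p))%nat with (pred n) in Hlast by lia.
    rewrite path_weight_app, Hlast, (rim_arc_weight n) in Hw by lia.
    cbn [seq path_weight] in Hw; rewrite (rim_arc_weight n) in Hw by lia.
    replace (S p + (pred n - S p))%nat with (pred n) in Hw by lia.
    rewrite <- (proj2 (Hsym p (S p) Hfwd)) in Hw.
    assert (Hedge : rim_length d n p = d p (S p))
      by (unfold rim_length; now rewrite rim_next_inner).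
    simpl prefix_sum in Hw; lra.
  -
    replace p with (pred n) in * by lia.
    rewrite rim_next_last in * by lia.
    pose proof (Hpath O (pred n) _ Hbwd (rim_arc n O (pred n) Hn ltac:(lia))) as Hw.
    rewrite (rim_arc_weight n) in Hw by lia.
    rewrite <- (proj2 (Hsym (pred n) O Hfwd)) in Hw.
    simpl prefix_sum in Hw; lra.
Qed.

Lemma wheel_spoke_triangle n d : (2 <= n)%nat -> distance_fn (wheel_adj n) d ->
  forall i, (i < n)%nat ->
  Rabs (d n i - d n (rim_next n i)) <= rim_length d n i /\
  rim_length d n i <= d n i + d n (rim_next n i).
Proof.
  intros Hn Hd i Hi; unfold rim_length.
  set (j := rim_next n i).
  assert (Hj : (j < n)%nat) by (apply rim_next_lt; lia).
  destruct (wheel_spoke n i Hi) as [Hni Hin].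
  destruct (wheel_spoke n j Hj) as [Hnj Hjn].
  destruct (wheel_rim n i Hn Hi) as [Hij Hji]; fold j in Hij, Hji.
  assert (Hneq : i <> j) by apply Hij.
  pose proof (distance_triangle _ d n j i Hd Hni Hij Hnj ltac:(lia) ltac:(lia) Hneq).
  pose proof (distance_triangle _ d n i j Hd Hnj Hji Hni ltac:(lia) ltac:(lia) ltac:(auto)).
  pose proof (distance_triangle _ d i j n Hd Hin Hnj Hij Hneq ltac:(lia) ltac:(lia)).
  destruct Hd as [Hsym _].
  rewrite (proj2 (Hsym j i Hji)), (proj2 (Hsym i n Hin)) in *.
  split; [apply Rabs_le|]; lra.
Qed.

Lemma fold_Rmax_le (l : list R) D :
  0 <= D -> (forall a, In a l -> a <= D) -> fold_right Rmax 0 l <= D.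
Proof.
  intro HD; induction l as [|a l IH]; intro Hle; simpl; [assumption|].
  apply Rmax_lub; [apply Hle; now left | apply IH; intros; apply Hle; now right].
Qed.

Lemma fold_Rmax_attained (l : list R) D :
  0 <= D -> (forall a, In a l -> a <= D) -> In D l -> fold_right Rmax 0 l = D.
Proof.
  intro HD; induction l as [|a l IH]; intros Hle Hin; [destruct Hin|]; simpl.
  destruct Hin as [-> | Hin].
  - apply Rmax_left, fold_Rmax_le; auto; intros; apply Hle; now right.
  - rewrite IH; auto; [apply Rmax_right, Hle; now left | intros; apply Hle; now right].
Qed.

Lemma linf_attained k (x : nat -> R) D :
  (forall j, (j < k)%nat -> Rabs (x j) <= D) ->
  (exists j, (j < k)%nat /\ Rabs (x j) = D) -> linf k x = D.
Proof.
  intros Hle [j [Hj HD]]; unfold linf; apply fold_Rmax_attained.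
  - rewrite <- HD; apply Rabs_pos.
  - intros a Ha; apply in_map_iff in Ha as [j' [<- Hj']].
    apply in_seq in Hj'; apply Hle; lia.
  - apply in_map_iff; exists j; split; [assumption|]; apply in_seq; lia.
Qed.

Lemma linf_swap k (x y : nat -> R) :
  linf k (fun j => x j - y j) = linf k (fun j => y j - x j).
Proof. unfold linf; f_equal; apply map_ext; intro; apply Rabs_minus_sym. Qed.

Lemma wheel_embedding n d (X : nat -> nat -> R) :
  (2 <= n)%nat -> distance_fn (wheel_adj n) d ->
  (forall k, (k < 4)%nat -> coordinate n (fun i => d n i) (rim_length d n) (X k)) ->
  (forall i, (i < n)%nat -> X O i = d n i) ->
  (forall i, (i < n)%nat -> exists k, (k < 4)%nat /\ tight n (rim_length d n) (X k) i) ->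
  forall u v, wheel_adj n u v ->
    linf 4 (fun j => (if u <? n then X j u else 0) - (if v <? n then X j v else 0)) = d u v.
Proof.
  intros Hn Hd Hcoord Hspoke Htight.
  assert (Hin : forall i, (i < n)%nat -> (i <? n) = true) by (intros; now apply Nat.ltb_lt).
  assert (Hspoke_edge : forall i, (i < n)%nat ->
            linf 4 (fun j => (if i <? n then X j i else 0) - (if n <? n then X j n else 0))
            = d n i).
  { intros i Hi; rewrite Hin, Nat.ltb_irrefl by assumption.
    apply linf_attained; [intros j Hj | exists O; split; [lia|]]; rewrite Rminus_0_r.
    - now apply Hcoord.
    - rewrite Hspoke by assumption; apply Rabs_right, Rle_ge, (proj1 Hd).
      now apply wheel_spoke. }
  assert (Hrim_edge : forall i, (i < n)%nat ->
            linf 4 (fun j => (if i <? n then X j i else 0) -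
                             (if rim_next n i <? n then X j (rim_next n i) else 0))
            = rim_length d n i).
  { intros i Hi; rewrite !Hin by (try apply rim_next_lt; lia).
    apply linf_attained; [intros j Hj; now apply Hcoord | now apply Htight]. }
  intros u v Huv; destruct Huv as [Hu [Hv [Hne Hcase]]].
  destruct (proj1 Hd u v (conj Hu (conj Hv (conj Hne Hcase)))) as [_ Hsym].
  destruct Hcase as [-> | [-> | [Hu' [Hv' [<- | <-]]]]].
  - rewrite linf_swap; apply Hspoke_edge; lia.
  - rewrite Hsym; apply Hspoke_edge; lia.
  - now apply Hrim_edge.
  - rewrite linf_swap, Hsym; now apply Hrim_edge.
Qed.

Theorem mainTheorem12 :
  forall n : nat, (3 <= n)%nat ->
    exists k : nat, (k <= 4)%nat /\ realizable_linf (wheel_adj n) k.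
Proof.
  intros n Hn; exists 4%nat; split; [lia|]; intros d Hd.
  destruct (rim_coordinates n (fun i => d n i) (rim_length d n))
    as [X [Hcoord [Hspoke Htight]]].
  - lia.
  - intros i Hi; apply (proj1 Hd); now apply wheel_spoke.
  - intros i Hi; apply (proj1 Hd), wheel_rim; lia.
  - intros i Hi; apply (wheel_spoke_triangle n d); auto; lia.
  - intros i Hi; apply (wheel_spoke_triangle n d); auto; lia.
  - apply wheel_rim_cycle; [lia | assumption].
  - exists (fun u j => if u <? n then X j u else 0).
    apply wheel_embedding; auto; lia.
Qed.
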